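(* Let $\Pi=(\mathsf A,\mathsf B)$ be a protocol and let $M^{\mathsf A}_\Pi$ be its $\mathsf A$-dominated measure. Then $\mathrm{Best}_{\mathsf B}(\Pi)=1-\mathbb E_{\ell\leftarrow L_\Pi}[M^{\mathsf A}_\Pi(\ell)]$.
   Context: An $m$-round single-bit-message protocol $\Pi$ is identified with the complete binary tree of height $m$ (nodes: binary strings of length $\le m$, root $\lambda$), with a control scheme, edge probabilities $e_\Pi(u,ub)$, common output $\chi_\Pi:\text{leaves}\to\{0,1\}$, node-visit probabilities $v_\Pi(u)$ and leaf distribution $L_\Pi$. For $b\in\{0,1\}$, $\Pi_b$ is the subprotocol on the subtree rooted at $b$ (the protocol conditioned on the first bit being $b$); its leaves are identified with leaves of $\Pi$ starting with $b$. Expectations over $L_\perp$ (undefined protocol) are $0$. The $\mathsf A$-dominated measure $M^{\mathsf A}_\Pi:\text{leaves}\to[0,1]$: if $\Pi$ has $0$ rounds with single leaf $\ell$, $M^{\mathsf A}_\Pi(\ell)=\chi_\Pi(\ell)$; otherwise, for a leaf $\ell$ with first bit $b=\ell_1$, writing $\mu_c=\mathbb E_{L_{\Pi_c}}[M^{\mathsf A}_{\Pi_c}]$: $M^{\mathsf A}_\Pi(\ell)=0$ if $e_\Pi(\lambda,b)=0$; $=M^{\mathsf A}_{\Pi_b}(\ell)$ if $e_\Pi(\lambda,b)=1$; $=M^{\mathsf A}_{\Pi_b}(\ell)$ if $e_\Pi(\lambda,b)\in(0,1)$ and ($\mathsf A$ controls the root or $\mu_b\le\mu_{1-b}$); and $=\frac{\mu_{1-b}}{\mu_b}M^{\mathsf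 A}_{\Pi_b}(\ell)$ otherwise. A deterministic strategy $\mathsf B'$ for $\mathsf B$ is valid if $v_\Pi(u)=0\Rightarrow v_{(\mathsf A,\mathsf B')}(u)=0$ for all $u$; $\mathrm{Best}_{\mathsf B}(\Pi)=\max_{\text{valid }\mathsf B'}(1-\mathrm{val}(\mathsf A,\mathsf B'))$, where $\mathrm{val}$ is the expected common output. *)

From HB Require Import structures.
From mathcomp Require Import all_boot all_order all_algebra.
Set Implicit Arguments. Unset Strict Implicit. Unset Printing Implicit Defensive.
Import Order.TTheory GRing.Theory Num.Theory.
Local Open Scope ring_scope.

(* An m-round single-bit-message protocol on the complete binary tree of
   height m; nodes are bit sequences of size <= m, the root is [::].
   Only values on nodes (resp. internal nodes, leaves) are meaningful. *)
Record protocol (R : realFieldType) := Protocol {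
  rounds : nat;
  ctrlA  : seq bool -> bool;
  edge   : seq bool -> bool -> R;  (* edge u b = e_Pi(u, ub) *)
  chi    : seq bool -> bool        (* common output on leaves *)
}.

Section Defs.
Variable R : realFieldType.

Definition wf_protocol (P : protocol R) : Prop :=
  forall u : seq bool, (size u < rounds P)%N ->
    (forall b, 0 <= edge P u b) /\ edge P u false + edge P u true = 1.

Definition visitE (e : seq bool -> bool -> R) (u : seq bool) : R :=
  \prod_(i < size u) e (take i u) (nth false u i).

Definition visit (P : protocol R) (u : seq bool) : R := visitE (edge P) u.

Definition Exp (n : nat) (P : protocol R) (f : seq bool -> R) : R :=
  \sum_(t : n.-tuple bool) visit P t * f t.

Definition ExpL (P : protocol R) (f : seq bool -> R) : R := Exp (rounds P) P f.

(* the subprotocol Pi_b on the subtree rooted at b; its leaves (of size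
   m-1) correspond to the leaves b :: l of Pi *)
Definition subp (P : protocol R) (b : bool) : protocol R :=
  Protocol (rounds P).-1 (fun u => ctrlA P (b :: u))
           (fun u => edge P (b :: u)) (fun u => chi P (b :: u)).

Fixpoint Mrec (n : nat) (P : protocol R) (l : seq bool) {struct n} : R :=
  match n with
  | 0 => (chi P l)%:R
  | n'.+1 =>
    let b := head false l in
    let Mb := Mrec n' (subp P b) (behead l) in
    let mu c := Exp n' (subp P c) (Mrec n' (subp P c)) in
    let eb := edge P [::] b in
    if eb == 0 then 0
    else if eb == 1 then Mb
    else if ctrlA P [::] || (mu b <= mu (~~ b)) then Mb
    else mu (~~ b) / mu b * Mb
  end.

Definition Mdom (P : protocol R) : seq bool -> R := Mrec (rounds P) P.

(* deterministic strategies for B: at a B-controlled node u, B sends s u *)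
Definition strategy := seq bool -> bool.

Definition execE (P : protocol R) (s : strategy) (u : seq bool) (b : bool) : R :=
  if ctrlA P u then edge P u b else (s u == b)%:R.

Definition valid (P : protocol R) (s : strategy) : Prop :=
  forall u : seq bool, (size u <= rounds P)%N ->
    visit P u = 0 -> visitE (execE P s) u = 0.

Definition val (P : protocol R) (s : strategy) : R :=
  \sum_(t : (rounds P).-tuple bool) visitE (execE P s) t * (chi P t)%:R.

Definition is_BestB (P : protocol R) (x : R) : Prop :=
  (exists s, valid P s /\ 1 - val P s = x) /\
  (forall s, valid P s -> 1 - val P s <= x).

End Defs.

From Pilot Require Import Defs.
From HB Require Import structures.
From mathcomp Require Import all_boot all_order all_algebra.
From mathcomp Require Import lra.
Set Implicit Arguments. Unset Strict Implicit. Unset Printing Implicit Defensive.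
Import Order.TTheory GRing.Theory Num.Theory.
Local Open Scope ring_scope.

(* By induction on the number of rounds, E[M^A_Pi] is the least value
   val(A, B') over valid strategies B' of B.  Write mu_b for E[M^A_{Pi_b}].
   If A controls the root, B can only react inside the subtrees, so the
   optimum is sum_b e(b) mu_b.  If B controls the root, B sends the bit c
   of smallest mu_c among the bits of positive probability; the rescaling
   of the heavier subtree by mu_c / mu_(~~c) makes E[M^A_Pi] = mu_c too. *)

Section Protocols.
Variable R : realFieldType.
Implicit Types (P : protocol R) (s : strategy) (e : seq bool -> bool -> R).

Lemma big_tupleS n (F : seq bool -> R) :
  \sum_(t : n.+1.-tuple bool) F t = \sum_(b : bool) \sum_(t : n.-tuple bool) F (b :: t).
Proof.
rewrite pair_big /=.
rewrite (reindex (fun p : bool * n.-tuple bool => [tuple of p.1 :: p.2])) //=.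
exists (fun t : n.+1.-tuple bool => (thead t, [tuple of behead t])).
  by move=> [b t] _ /=; rewrite theadE; congr pair; apply: val_inj.
by move=> t _; rewrite [t in RHS]tuple_eta.
Qed.

Lemma big_tuple0 (F : seq bool -> R) : \sum_(t : 0.-tuple bool) F t = F [::].
Proof.
rewrite (eq_bigr (fun _ => F [::])); last by move=> t _; rewrite tuple0.
by rewrite sumr_const card_tuple expn0.
Qed.

Lemma bool_indN c (p : bool -> Prop) : p c -> p (~~ c) -> forall b, p b.
Proof. by case: c => pc pnc []. Qed.

Lemma visitE_nil e : visitE e [::] = 1.
Proof. exact: big_ord0. Qed.

Lemma visitE_cons e b t :
  visitE e (b :: t) = e [::] b * visitE (fun u => e (b :: u)) t.
Proof. by rewrite /visitE /= big_ord_recl. Qed.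

(* [Exp] and [val] are both instances of this expectation over leaves. *)
Definition expE n e (f : seq bool -> R) : R :=
  \sum_(t : n.-tuple bool) visitE e t * f t.

Lemma expE0 e f : expE 0 e f = f [::].
Proof. by rewrite /expE (big_tuple0 (fun t => visitE e t * f t)) visitE_nil mul1r. Qed.

Lemma expES n e f : expE n.+1 e f =
  \sum_(b : bool) e [::] b * expE n (fun u => e (b :: u)) (fun t => f (b :: t)).
Proof.
rewrite /expE (big_tupleS _ (fun t => visitE e t * f t)); apply: eq_bigr => b _.
rewrite big_distrr /=; apply: eq_bigr => t _; by rewrite visitE_cons mulrA.
Qed.

Lemma ExpS n P f : Exp n.+1 P f =
  \sum_(b : bool) edge P [::] b * Exp n (subp P b) (fun t => f (b :: t)).
Proof. exact: expES. Qed.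

Lemma ExpZ n P c f : Exp n P (fun t => c * f t) = c * Exp n P f.
Proof. by rewrite /Exp big_distrr; apply: eq_bigr => t _; rewrite mulrCA. Qed.

Lemma subp_wf P b : wf_protocol P -> wf_protocol (subp P b).
Proof. by move=> wfP u hu; apply: wfP; move: hu => /=; case: (rounds P). Qed.

Lemma root_edge_compl P b : wf_protocol P -> (0 < rounds P)%N ->
  edge P [::] b = 0 -> edge P [::] (~~ b) = 1.
Proof. by move=> wfP /(wfP [::])[_]; case: b => /= sum1 e0; lra. Qed.

Definition mu n P b : R := Exp n (subp P b) (Mrec n (subp P b)).

Definition root_factor n P b : R :=
  let eb := edge P [::] b in
  if eb == 0 then 0 else if eb == 1 then 1
  else if ctrlA P [::] || (mu n P b <= mu n P (~~ b)) then 1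
  else mu n P (~~ b) / mu n P b.

Lemma Mrec_cons n P b t :
  Mrec n.+1 P (b :: t) = root_factor n P b * Mrec n (subp P b) t.
Proof.
rewrite /= /root_factor /mu.
by case: ifP => _; [rewrite mul0r | case: ifP => _; [|case: ifP => _]; rewrite ?mul1r].
Qed.

Lemma Exp_MrecS n P : Exp n.+1 P (Mrec n.+1 P) =
  \sum_(b : bool) edge P [::] b * (root_factor n P b * mu n P b).
Proof.
rewrite ExpS; apply: eq_bigr => b _; congr (_ * _).
by rewrite /mu -ExpZ; apply: eq_bigr => t _; rewrite Mrec_cons.
Qed.

Lemma Exp_MrecS_ctrlA n P : ctrlA P [::] ->
  Exp n.+1 P (Mrec n.+1 P) = \sum_(b : bool) edge P [::] b * mu n P b.
Proof.
move=> rootA; rewrite Exp_MrecS; apply: eq_bigr => b _; rewrite /root_factor rootA.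
by case: eqP => [->|_]; rewrite ?mul0r //; case: eqP; rewrite mul1r.
Qed.

Lemma Exp_MrecS_det n P c : wf_protocol P -> rounds P = n.+1 ->
  edge P [::] c = 1 -> Exp n.+1 P (Mrec n.+1 P) = mu n P c.
Proof.
move=> wfP hn ec; have [_ sum1] := wfP [::] (ltac:(by rewrite hn)).
have enc : edge P [::] (~~ c) = 0 by case: c ec => /= ec; lra.
rewrite Exp_MrecS big_bool /root_factor.
by case: c ec enc => /= -> ->; rewrite !eqxx oner_eq0 /= !mul1r mul0r ?addr0 ?add0r.
Qed.

Lemma Exp_MrecS_ctrlB n P c : wf_protocol P -> rounds P = n.+1 ->
  ~~ ctrlA P [::] -> (forall b, edge P [::] b != 0) ->
  0 <= mu n P c -> mu n P c <= mu n P (~~ c) ->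
  Exp n.+1 P (Mrec n.+1 P) = mu n P c.
Proof.
move=> wfP hn rootB e_neq0 mu_c_ge0 mu_c_min.
have [_ sum1] := wfP [::] (ltac:(by rewrite hn)).
have e_neq1 b : edge P [::] b != 1.
  by apply: contra (e_neq0 (~~ b)) => /eqP eb1; apply/eqP; case: b eb1 => /= eb1; lra.
have factor b : root_factor n P b * mu n P b = mu n P c.
  rewrite /root_factor (negbTE (e_neq0 b)) (negbTE (e_neq1 b)) (negbTE rootB) /=.
  elim/(@bool_indN c): b; first by rewrite mu_c_min mul1r.
  rewrite negbK; case: leP => [le_mu|lt_mu].
    by rewrite mul1r; apply: le_anti; rewrite le_mu.
  by rewrite divfK // gt_eqF // (le_lt_trans mu_c_ge0).
rewrite Exp_MrecS; under eq_bigr do rewrite factor.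
by rewrite -big_distrl big_bool /= addrC sum1 mul1r.
Qed.

Definition argmin_mu n P c : Prop :=
  edge P [::] c != 0 /\ forall b, edge P [::] b != 0 -> mu n P c <= mu n P b.

Lemma Exp_MrecS_argmin n P : wf_protocol P -> rounds P = n.+1 ->
  ~~ ctrlA P [::] -> (forall b, 0 <= mu n P b) ->
  exists2 c, argmin_mu n P c & Exp n.+1 P (Mrec n.+1 P) = mu n P c.
Proof.
move=> wfP hn rootB mu_ge0.
have det_case b : edge P [::] b = 0 ->
    exists2 c, argmin_mu n P c & Exp n.+1 P (Mrec n.+1 P) = mu n P c.
  move=> eb0; have enb1 := root_edge_compl wfP (ltac:(by rewrite hn)) eb0.
  exists (~~ b); last exact: Exp_MrecS_det enb1.
  split; first by rewrite enb1 oner_eq0.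
  by elim/(@bool_indN b); [rewrite eb0 eqxx | move=> _; exact: lexx].
have [e0|e0_neq0] := eqVneq (edge P [::] false) 0; first exact: det_case e0.
have [e1|e1_neq0] := eqVneq (edge P [::] true) 0; first exact: det_case e1.
have e_neq0 b : edge P [::] b != 0 by case: b.
pose c := mu n P true <= mu n P false.
have mu_c_min : mu n P c <= mu n P (~~ c).
  by rewrite /c; case: (leP (mu n P true) (mu n P false)) => [|/ltW].
exists c; last exact: Exp_MrecS_ctrlB.
by split=> //; elim/(@bool_indN c) => _; [exact: lexx | exact: mu_c_min].
Qed.

Definition sub_strategy s b : strategy := fun u => s (b :: u).

Definition join_strategy (c : bool) (sb : bool -> strategy) : strategy :=
  fun u => if u is b :: u' then sb b u' else c.

Lemma val_expE P s :
  Defs.val P s = expE (rounds P) (execE P s) (fun t => (chi P t)%:R).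
Proof. by []. Qed.

Lemma valS n P s : rounds P = n.+1 -> Defs.val P s =
  \sum_(b : bool) execE P s [::] b * Defs.val (subp P b) (sub_strategy s b).
Proof.
move=> hn; rewrite val_expE hn expES.
by under [RHS]eq_bigr do rewrite val_expE /= hn.
Qed.

Lemma val_rounds0 P s : rounds P = 0%N -> Defs.val P s = (chi P [::])%:R.
Proof. by move=> h0; rewrite val_expE h0 expE0. Qed.

Lemma valid_rounds0 P s : rounds P = 0%N -> valid P s.
Proof.
move=> h0 u; rewrite h0 leqn0 => /nilP ->.
by rewrite /visit visitE_nil => /eqP; rewrite oner_eq0.
Qed.

Lemma valid_sub P s b : (0 < rounds P)%N -> valid P s -> execE P s [::] b != 0 ->
  valid (subp P b) (sub_strategy s b).
Proof.
move=> rounds_gt0 validP eb_neq0 u hu visit0.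
have size_bu : (size (b :: u) <= rounds P)%N.
  by move: hu => /=; case: (rounds P) rounds_gt0.
rewrite /visit in visit0; move: (validP _ size_bu).
rewrite /visit !visitE_cons visit0 mulr0 => /(_ erefl)/eqP.
by rewrite mulf_eq0 (negbTE eb_neq0) => /eqP.
Qed.

Lemma valid_root P s b : (0 < rounds P)%N -> valid P s ->
  edge P [::] b = 0 -> execE P s [::] b = 0.
Proof.
move=> rounds_gt0 validP eb0; have := validP [:: b] rounds_gt0.
by rewrite /visit !visitE_cons !visitE_nil !mulr1; apply.
Qed.

Lemma valid_join P c sb :
  (forall b, edge P [::] b = 0 -> execE P (join_strategy c sb) [::] b = 0) ->
  (forall b, valid (subp P b) (sb b)) -> valid P (join_strategy c sb).
Proof.
move=> root_valid sub_valid [|b u] hu.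
  by rewrite /visit visitE_nil => /eqP; rewrite oner_eq0.
rewrite /visit !visitE_cons => /eqP; rewrite mulf_eq0 => /orP[/eqP eb0|/eqP visit0].
  by rewrite root_valid ?mul0r.
by rewrite (sub_valid b u) ?mulr0 //=; case: (rounds P) hu.
Qed.

Definition is_min_val P (x : R) : Prop :=
  (exists2 s, valid P s & Defs.val P s = x) /\
  (forall s, valid P s -> x <= Defs.val P s).

Section RootStep.
Variables (n : nat) (P : protocol R).
Hypotheses (wfP : wf_protocol P) (hn : rounds P = n.+1).
Variable opt : bool -> strategy.
Hypothesis opt_valid : forall b, valid (subp P b) (opt b).
Hypothesis opt_val : forall b, Defs.val (subp P b) (opt b) = mu n P b.
Hypothesis mu_le_val :
  forall b s, valid (subp P b) s -> mu n P b <= Defs.val (subp P b) s.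

Let rounds_gt0 : (0 < rounds P)%N. Proof. by rewrite hn. Qed.

Lemma val_join c : Defs.val P (join_strategy c opt) =
  \sum_(b : bool) execE P (join_strategy c opt) [::] b * mu n P b.
Proof. by rewrite (valS _ hn); apply: eq_bigr => b _; rewrite -opt_val. Qed.

Lemma min_val_ctrlA : ctrlA P [::] ->
  is_min_val P (\sum_(b : bool) edge P [::] b * mu n P b).
Proof.
move=> rootA; have execE_root s : execE P s [::] = edge P [::] by rewrite /execE rootA.
split.
  exists (join_strategy false opt); last by rewrite val_join execE_root.
  by apply: valid_join => // b; rewrite execE_root.
move=> s validP; rewrite (valS _ hn) execE_root; apply: ler_sum => b _.
have [->|eb_neq0] := eqVneq (edge P [::] b) 0; first by rewrite !mul0r.
have [eb_ge0 _] := @wfP [::] rounds_gt0.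
by rewrite ler_wpM2l // mu_le_val //; apply: valid_sub; rewrite ?execE_root.
Qed.

Lemma min_val_ctrlB c : ~~ ctrlA P [::] -> argmin_mu n P c -> is_min_val P (mu n P c).
Proof.
move=> rootB [ec_neq0 mu_c_min].
have execE_root s b : execE P s [::] b = (s [::] == b)%:R.
  by rewrite /execE (negbTE rootB).
split.
  exists (join_strategy c opt); last first.
    rewrite val_join big_bool !execE_root.
    by case: c {ec_neq0 mu_c_min} => /=; rewrite mul1r mul0r ?addr0 ?add0r.
  apply: valid_join => // b eb0; rewrite execE_root /=.
  by case: eqP => // cb; move: ec_neq0; rewrite cb eb0 eqxx.
move=> s validP; set d := s [::].
have execE_d : execE P s [::] d != 0 by rewrite execE_root eqxx oner_eq0.
have ed_neq0 : edge P [::] d != 0.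
  by apply: contra execE_d => /eqP ed0; rewrite (valid_root rounds_gt0 validP ed0).
have -> : Defs.val P s = Defs.val (subp P d) (sub_strategy s d).
  rewrite (valS _ hn) big_bool !execE_root -/d.
  by case: d {execE_d ed_neq0} => /=; rewrite mul1r mul0r ?addr0 ?add0r.
exact: le_trans (mu_c_min _ ed_neq0) (mu_le_val (valid_sub rounds_gt0 validP execE_d)).
Qed.

End RootStep.

Lemma min_val_Exp_Mrec n P : rounds P = n -> wf_protocol P ->
  0 <= Exp n P (Mrec n P) /\ is_min_val P (Exp n P (Mrec n P)).
Proof.
elim: n P => [|n IH] P hn wfP.
  rewrite [Exp _ _ _]expE0 /=; split; first by case: (chi P [::]).
  split=> [|s _]; last by rewrite val_rounds0.
  by exists (fun=> false); [exact: valid_rounds0 | rewrite val_rounds0].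
have IHb b := IH (subp P b) (congr1 predn hn) (subp_wf (b := b) wfP).
have mu_ge0 b : 0 <= mu n P b by case: (IHb b).
have [opt opt_spec] : exists opt : bool -> strategy,
    forall b, valid (subp P b) (opt b) /\ Defs.val (subp P b) (opt b) = mu n P b.
  have [_ [[s0 ? ?] _]] := IHb false; have [_ [[s1 ? ?] _]] := IHb true.
  by exists (fun b => if b then s1 else s0); case.
have opt_valid b := (opt_spec b).1; have opt_val b := (opt_spec b).2.
have mu_le_val b := (IHb b).2.2.
case rootA : (ctrlA P [::]).
  rewrite Exp_MrecS_ctrlA //; split; last exact: min_val_ctrlA.
  have [e_ge0 _] := wfP [::] (ltac:(by rewrite hn)).
  by apply: sumr_ge0 => b _; rewrite mulr_ge0.
have [c c_argmin ->] := Exp_MrecS_argmin wfP hn (negbT rootA) mu_ge0.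
by split; last exact: min_val_ctrlB (negbT rootA) c_argmin.
Qed.

End Protocols.

Theorem lemma3p12 (R : realFieldType) (P : protocol R) :
  wf_protocol P ->
  is_BestB P (1 - ExpL P (Mdom P)).
Proof.
move=> wfP.
have [_ [[s validP val_s] val_ge]] := min_val_Exp_Mrec (erefl (rounds P)) wfP.
split; first by exists s; rewrite val_s.
by move=> s' validP'; rewrite lerD2l lerN2 val_ge.
Qed.
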